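(* In the setting described in the context, suppose $\mathrm{ev}$ is multiplicative and $\iota$-involutive. Then the following are equivalent: (FM') properties (F) and (M') both hold; (A) every object $W$ of $\mathcal{P}^1$ is a biproduct $W\cong\bigoplus_{i=1}^m\emptyset$ for some $m\in\mathbb{N}_0$.
   Context: Setting. Let $\Bbbk$ be a commutative ring with a ring involution $\iota$. Let $\mathcal{P}$ be a small $\Bbbk$-linear (strict) symmetric monoidal category with monoidal product $\sqcup$ and unit object $\emptyset$, in which every object $W$ has a chosen dual $W^r$, giving the standard identifications $\operatorname{Hom}(W_1,W_2)\cong\operatorname{Hom}(\emptyset,W_2\sqcup W_1^r)\cong\operatorname{Hom}(W_1\sqcup W_2^r,\emptyset)$. (In the paper $\mathcal{P}$ is the category of closed $\mathcal{C}$-labeled webs and prefoams.) Let $\mathrm{tr}_W$ be the categorical trace and $\mathrm{ev}\colon\operatorname{End}_{\mathcal{P}}(\emptyset)\to\Bbbk$ a $\Bbbk$-linear map; multiplicative means $\mathrm{ev}(\mathrm{id}_\emptyset)=1$ and $\mathrm{ev}(\Sigma_1\sqcup\Sigma_2)=\mathrm{ev}(\Sigma_1)\mathrm{ev}(\Sigma_2)$. Let $I_1(W,W')\subseteq\operatorname{Hom}(W,W')$ be the set of $\Sigma$ with $\mathrm{ev}(\mathrm{tr}_W(\Sigma'\circ\Sigma))=0$ for all $\Sigma'\in\operatorname{Hom}(W',W)$ (an ideal) and $\mathcal{P}^1:=\mathcal{P}/I_1$; the pairing $\langle\Sigma',\Sigma\rangle:=\mathrm{ev}(\mathrm{tr}_W(\Sigma'\circ\Sigma))$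 descends to $\mathcal{P}^1$. Reversal structure ($\iota$-involutivity): $\iota$-semilinear maps $(-)^r\colon\operatorname{Hom}(W_1,W_2)\to\operatorname{Hom}(W_2,W_1)$ with $(\Sigma^r)^r=\Sigma$, $(\Sigma_2\circ\Sigma_1)^r=\Sigma_1^r\circ\Sigma_2^r$, $\mathrm{tr}_W(\Sigma^r)=\mathrm{tr}_W(\Sigma)^r$, and $\mathrm{ev}(\Sigma^r)=\iota(\mathrm{ev}(\Sigma))$ for $\Sigma\in\operatorname{End}(\emptyset)$; these descend to $\mathcal{P}^1$. Property (M'): for all $W,W'$ the composition map $\operatorname{Hom}_{\mathcal{P}^1}(\emptyset,W')\otimes\operatorname{Hom}_{\mathcal{P}^1}(W,\emptyset)\to\operatorname{Hom}_{\mathcal{P}^1}(W,W')$ is surjective. Property (F): for all $V,W$ the module $\operatorname{Hom}_{\mathcal{P}^1}(W,V)$ is free of finite rank and $\underline{\Sigma}'\mapsto\langle\underline{\Sigma}'^r,-\rangle$ is a bijection $\operatorname{Hom}_{\mathcal{P}^1}(W,V)\to\operatorname{Hom}_{\mathcal{P}^1}(W,V)^*$. A biproduct $W\cong\bigoplus_{i=1}^m\emptyset$ in $\mathcal{P}^1$ means morphisms $f_i\colon W\to\emptyset$, $g_i\colon\emptyset\to W$ with $f_i\circ g_j=\delta_{ij}\mathrm{id}_\emptyset$ and $\sum_ig_i\circ f_i=\mathrm{id}_W$. *)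

From HB Require Import structures.
From mathcomp Require Import all_boot all_algebra.
Set Implicit Arguments. Unset Strict Implicit. Unset Printing Implicit Defensive.
Import GRing.Theory.
Local Open Scope ring_scope.

(* Data of a small k-linear strict symmetric monoidal category with chosen  *)
(* (right) duals.                                                           *)
Record ssmc_data (k : comPzRingType) := SSMCData {
  obj : Type;
  Mor : obj -> obj -> lmodType k;
  cmp : forall A B C : obj, Mor B C -> Mor A B -> Mor A C;
  idH : forall A : obj, Mor A A;
  tens : obj -> obj -> obj;
  unitO : obj;
  tensm : forall A B C D : obj, Mor A B -> Mor C D -> Mor (tens A C) (tens B D);
  braid : forall A B : obj, Mor (tens A B) (tens B A);
  dualO : obj -> obj;
  coev : forall A : obj, Mor unitO (tens A (dualO A));
  evm : forall A : obj, Mor (tens (dualO A) A) unitO;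
  tens_assoc : forall A B C : obj, tens (tens A B) C = tens A (tens B C);
  tens_unitl : forall A : obj, tens unitO A = A;
  tens_unitr : forall A : obj, tens A unitO = A
}.

Arguments obj {k} P : rename.
Arguments Mor {k} P A B : rename.
Arguments cmp {k P A B C} g f : rename.
Arguments idH {k P} A : rename.
Arguments tens {k P} A B : rename.
Arguments unitO {k} P : rename.
Arguments tensm {k P A B C D} f g : rename.
Arguments braid {k P} A B : rename.
Arguments dualO {k P} A : rename.
Arguments coev {k P} A : rename.
Arguments evm {k P} A : rename.
Arguments tens_assoc {k P} A B C : rename.
Arguments tens_unitl {k P} A : rename.
Arguments tens_unitr {k P} A : rename.

Definition castH {k : comPzRingType} {P : ssmc_data k} {A A' B B' : obj P}
  (eA : A = A') (eB : B = B') (f : Mor P A B) : Mor P A' B' :=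
  match eA in _ = X return Mor P X B' with
  | erefl => match eB in _ = Y return Mor P A Y with erefl => f end
  end.

Definition is_ssmc {k : comPzRingType} (P : ssmc_data k) : Prop :=
  (forall (A B C D : obj P) (h : Mor P C D) (g : Mor P B C) (f : Mor P A B),
      cmp h (cmp g f) = cmp (cmp h g) f) /\
  (forall (A B : obj P) (f : Mor P A B), cmp (idH B) f = f) /\
  (forall (A B : obj P) (f : Mor P A B), cmp f (idH A) = f) /\
  (forall (A B C : obj P) (a : k) (g g' : Mor P B C) (f : Mor P A B),
      cmp (a *: g + g') f = a *: cmp g f + cmp g' f) /\
  (forall (A B C : obj P) (a : k) (g : Mor P B C) (f f' : Mor P A B),
      cmp g (a *: f + f') = a *: cmp g f + cmp g f') /\
  (forall (A B C A' B' C' : obj P) (g : Mor P B C) (f : Mor P A B)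
          (g' : Mor P B' C') (f' : Mor P A' B'),
      tensm (cmp g f) (cmp g' f') = cmp (tensm g g') (tensm f f')) /\
  (forall A B : obj P, tensm (idH A) (idH B) = idH (tens A B)) /\
  (forall (A B C D : obj P) (a : k) (f f' : Mor P A B) (g : Mor P C D),
      tensm (a *: f + f') g = a *: tensm f g + tensm f' g) /\
  (forall (A B C D : obj P) (a : k) (f : Mor P A B) (g g' : Mor P C D),
      tensm f (a *: g + g') = a *: tensm f g + tensm f g') /\
  (forall (A A' B B' C C' : obj P) (f : Mor P A A') (g : Mor P B B') (h : Mor P C C'),
      tensm (tensm f g) h =
      castH (esym (tens_assoc A B C)) (esym (tens_assoc A' B' C'))
            (tensm f (tensm g h))) /\
  (forall (A B : obj P) (f : Mor P A B),
      tensm (idH (unitO P)) f = castH (esym (tens_unitl A)) (esym (tens_unitl B)) f) /\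
  (forall (A B : obj P) (f : Mor P A B),
      tensm f (idH (unitO P)) = castH (esym (tens_unitr A)) (esym (tens_unitr B)) f) /\
  (forall (A B C D : obj P) (f : Mor P A B) (g : Mor P C D),
      cmp (braid B D) (tensm f g) = cmp (tensm g f) (braid A C)) /\
  (forall A B : obj P, cmp (braid B A) (braid A B) = idH (tens A B)) /\
  (forall A B C : obj P,
      braid A (tens B C) =
      castH erefl (esym (tens_assoc B C A))
        (cmp (tensm (idH B) (braid A C))
             (castH (tens_assoc A B C) (tens_assoc B A C)
                    (tensm (braid A B) (idH C))))) /\
  (forall A : obj P,
      castH erefl (tens_unitr A)
        (cmp (tensm (idH A) (evm A))
             (castH (tens_unitl A) (tens_assoc A (dualO A) A)
                    (tensm (coev A) (idH A)))) = idH A) /\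
  (forall A : obj P,
      castH erefl (tens_unitl (dualO A))
        (cmp (tensm (evm A) (idH (dualO A)))
             (castH (tens_unitr (dualO A)) (esym (tens_assoc (dualO A) A (dualO A)))
                    (tensm (idH (dualO A)) (coev A)))) = idH (dualO A)).

Definition ctr {k : comPzRingType} {P : ssmc_data k} (W : obj P) (f : Mor P W W)
  : Mor P (unitO P) (unitO P) :=
  cmp (evm W) (cmp (braid W (dualO W)) (cmp (tensm f (idH (dualO W))) (coev W))).

Definition tens0 {k : comPzRingType} {P : ssmc_data k}
  (s1 s2 : Mor P (unitO P) (unitO P)) : Mor P (unitO P) (unitO P) :=
  castH (tens_unitl (unitO P)) (tens_unitl (unitO P)) (tensm s1 s2).

Section P1.
Variables (k : comPzRingType) (P : ssmc_data k)
          (ev : Mor P (unitO P) (unitO P) -> k).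

Definition ev_linear : Prop := forall (a : k) (x y : Mor P (unitO P) (unitO P)),
  ev (a *: x + y) = a * ev x + ev y.

Definition ev_multiplicative : Prop :=
  ev (idH (unitO P)) = 1 /\
  forall s1 s2 : Mor P (unitO P) (unitO P), ev (tens0 s1 s2) = ev s1 * ev s2.

Definition pairing {W W' : obj P} (s' : Mor P W' W) (s : Mor P W W') : k :=
  ev (ctr (cmp s' s)).

Definition I1 {W W' : obj P} (s : Mor P W W') : Prop :=
  forall s' : Mor P W' W, pairing s' s = 0.

(* equality of morphisms in P^1 = P / I_1 *)
Definition eq1 {W W' : obj P} (s t : Mor P W W') : Prop := I1 (s - t).

Definition is_reversal (iota : {rmorphism k -> k})
  (rev : forall A B : obj P, Mor P A B -> Mor P B A) : Prop :=
  (forall (A B : obj P) (a : k) (f g : Mor P A B),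
      rev A B (a *: f + g) = iota a *: rev A B f + rev A B g) /\
  (forall (A B : obj P) (f : Mor P A B), rev B A (rev A B f) = f) /\
  (forall (A B C : obj P) (g : Mor P B C) (f : Mor P A B),
      rev A C (cmp g f) = cmp (rev A B f) (rev B C g)) /\
  (forall (W : obj P) (f : Mor P W W), ctr (rev W W f) = rev _ _ (ctr f)).

Definition ev_involutive (iota : {rmorphism k -> k})
  (rev : forall A B : obj P, Mor P A B -> Mor P B A) : Prop :=
  is_reversal iota rev /\
  forall s : Mor P (unitO P) (unitO P), ev (rev _ _ s) = iota (ev s).

(* Property (M'): Hom_{P^1}(∅,W') ⊗ Hom_{P^1}(W,∅) -> Hom_{P^1}(W,W') is onto *)
Definition propM' : Prop :=
  forall (W W' : obj P) (s : Mor P W W'),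
  exists (n : nat) (g : 'I_n -> Mor P (unitO P) W') (f : 'I_n -> Mor P W (unitO P)),
    eq1 s (\sum_(i < n) cmp (g i) (f i)).

Definition propF (rev : forall A B : obj P, Mor P A B -> Mor P B A) : Prop :=
  forall V W : obj P,
  (* Hom_{P^1}(W,V) is free of finite rank *)
  (exists (n : nat) (b : 'I_n -> Mor P W V),
     (forall s : Mor P W V, exists c : 'I_n -> k, eq1 s (\sum_(i < n) c i *: b i)) /\
     (forall c : 'I_n -> k, I1 (\sum_(i < n) c i *: b i) -> forall i, c i = 0)) /\
  (* s' |-> <s'^r, -> is a bijection Hom_{P^1}(W,V) -> Hom_{P^1}(W,V)^* *)
  (forall s1 s2 : Mor P W V,
     (forall s : Mor P W V, pairing (rev W V s1) s = pairing (rev W V s2) s) ->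
     eq1 s1 s2) /\
  (forall phi : Mor P W V -> k,
     (forall (a : k) (x y : Mor P W V), phi (a *: x + y) = a * phi x + phi y) ->
     (forall x : Mor P W V, I1 x -> phi x = 0) ->
     exists s' : Mor P W V, forall s : Mor P W V, phi s = pairing (rev W V s') s).

Definition propA : Prop :=
  forall W : obj P,
  exists (m : nat) (f : 'I_m -> Mor P W (unitO P)) (g : 'I_m -> Mor P (unitO P) W),
    (forall i j : 'I_m,
        eq1 (cmp (f i) (g j)) (if i == j then idH (unitO P) else 0)) /\
    eq1 (\sum_(i < m) cmp (g i) (f i)) (idH W).

End P1.

(* Under (A), biproduct decompositions [W = (+)_i unitO] (via [f_i], [g_i]) and
   [V = (+)_j unitO] (via [f'_j], [g'_j]) give [Hom(W, V)] in [P^1] the basis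
   [g'_j o f_i], with coordinates [ev (f'_j o s o g_i)], because [ev] identifies
   [End(unitO)] in [P^1] with [k]; every functional is then a pairing, the reversal
   makes the pairing nondegenerate, and (M') is [s = sum_i (s o g_i) o f_i].
   Conversely, (F) gives a basis [b_i] of [Hom(W, unitO)] in [P^1], and representing
   its coordinate functionals gives [g_j] with [b_i o g_j = delta_ij]; writing
   [id_W = sum_i h_i o b_i] by (M') forces [g_j = h_j], so [W] is a biproduct.
   The categorical input is that the trace is cyclic and the identity on
   [End(unitO)], and that on [End(unitO)] the monoidal product is composition:
   these make [I_1] a two-sided ideal and [ev] multiplicative for composition. *)

From HB Require Import structures.
From mathcomp Require Import all_boot all_algebra.
From Stdlib Require Import ClassicalEpsilon ProofIrrelevance.
Set Implicit Arguments. Unset Strict Implicit. Unset Printing Implicit Defensive.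
Import GRing.Theory.
Local Open Scope ring_scope.

(** * Cyclicity of the trace *)

Section SymmetricMonoidal.
Variables (k : comPzRingType) (P : ssmc_data k).
Hypothesis HP : is_ssmc P.

Lemma cmpA A B C D (h : Mor P C D) (g : Mor P B C) (f : Mor P A B) :
  cmp h (cmp g f) = cmp (cmp h g) f.
Proof. exact: HP.1. Qed.
Lemma cmp1l A B (f : Mor P A B) : cmp (idH B) f = f.
Proof. exact: HP.2.1. Qed.
Lemma cmp1r A B (f : Mor P A B) : cmp f (idH A) = f.
Proof. exact: HP.2.2.1. Qed.
Lemma cmp_linearl A B C (f : Mor P A B) a (g g' : Mor P B C) :
  cmp (a *: g + g') f = a *: cmp g f + cmp g' f.
Proof. exact: HP.2.2.2.1. Qed.
Lemma cmp_linearr A B C (g : Mor P B C) a (f f' : Mor P A B) :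
  cmp g (a *: f + f') = a *: cmp g f + cmp g f'.
Proof. exact: HP.2.2.2.2.1. Qed.
Lemma tensm_cmp A B C A' B' C' (g : Mor P B C) (f : Mor P A B)
    (g' : Mor P B' C') (f' : Mor P A' B') :
  tensm (cmp g f) (cmp g' f') = cmp (tensm g g') (tensm f f').
Proof. exact: HP.2.2.2.2.2.1. Qed.
Lemma tensm1 (A B : obj P) : tensm (idH A) (idH B) = idH (tens A B).
Proof. exact: HP.2.2.2.2.2.2.1. Qed.
Lemma tensm_linearl A B C D (g : Mor P C D) a (f f' : Mor P A B) :
  tensm (a *: f + f') g = a *: tensm f g + tensm f' g.
Proof. exact: HP.2.2.2.2.2.2.2.1. Qed.
Lemma tensmA A A' B B' C C' (f : Mor P A A') (g : Mor P B B') (h : Mor P C C') :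
  tensm (tensm f g) h =
  castH (esym (tens_assoc A B C)) (esym (tens_assoc A' B' C')) (tensm f (tensm g h)).
Proof. exact: HP.2.2.2.2.2.2.2.2.2.1. Qed.
Lemma tensm1l A B (f : Mor P A B) :
  tensm (idH (unitO P)) f = castH (esym (tens_unitl A)) (esym (tens_unitl B)) f.
Proof. exact: HP.2.2.2.2.2.2.2.2.2.2.1. Qed.
Lemma tensm1r A B (f : Mor P A B) :
  tensm f (idH (unitO P)) = castH (esym (tens_unitr A)) (esym (tens_unitr B)) f.
Proof. exact: HP.2.2.2.2.2.2.2.2.2.2.2.1. Qed.
Lemma braid_natural A B C D (f : Mor P A B) (g : Mor P C D) :
  cmp (braid B D) (tensm f g) = cmp (tensm g f) (braid A C).
Proof. exact: HP.2.2.2.2.2.2.2.2.2.2.2.2.1. Qed.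
Lemma braidK (A B : obj P) : cmp (braid B A) (braid A B) = idH (tens A B).
Proof. exact: HP.2.2.2.2.2.2.2.2.2.2.2.2.2.1. Qed.
Lemma braid_hexagon (A B C : obj P) :
  braid A (tens B C) =
  castH erefl (esym (tens_assoc B C A))
    (cmp (tensm (idH B) (braid A C))
         (castH (tens_assoc A B C) (tens_assoc B A C) (tensm (braid A B) (idH C)))).
Proof. exact: HP.2.2.2.2.2.2.2.2.2.2.2.2.2.2.1. Qed.
Lemma zigzag_coev (A : obj P) :
  castH erefl (tens_unitr A)
    (cmp (tensm (idH A) (evm A))
         (castH (tens_unitl A) (tens_assoc A (dualO A) A) (tensm (coev A) (idH A)))) =
  idH A.
Proof. exact: HP.2.2.2.2.2.2.2.2.2.2.2.2.2.2.2.1. Qed.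

(* Arrows hide their objects in the type, so that the strictness equations on
   objects can be used by rewriting instead of casts; [acomp] is only meaningful
   on composable arrows (it returns [0] otherwise). *)
Record arrow := Arrow { src : obj P; tgt : obj P; mor : Mor P src tgt }.
Arguments Arrow {src tgt} mor.

Lemma Arrow_castH A A' B B' (eA : A = A') (eB : B = B') (f : Mor P A B) :
  Arrow (castH eA eB f) = Arrow f.
Proof. by case: A' / eA; case: B' / eB. Qed.

Lemma Arrow_inj A B (f g : Mor P A B) : Arrow f = Arrow g -> f = g.
Proof.
move=> efg.
suff castK : forall (h : arrow) (eA : src h = A) (eB : tgt h = B),
    h = Arrow g -> castH eA eB (mor h) = g by exact: (castK (Arrow f) erefl erefl efg).
move=> h eA eB eh; subst h => /=.
by rewrite (proof_irrelevance _ eA erefl) (proof_irrelevance _ eB erefl).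
Qed.

Definition acomp (g f : arrow) : arrow :=
  Arrow (match excluded_middle_informative (tgt f = src g) with
         | left e => cmp (mor g) (castH erefl e (mor f))
         | right _ => 0 : Mor P (src f) (tgt g)
         end).
Definition atens (f g : arrow) := Arrow (tensm (mor f) (mor g)).
Definition aid (X : obj P) := Arrow (idH X).
Definition abraid (X Y : obj P) := Arrow (braid X Y).
Definition aevm (X : obj P) := Arrow (evm X).
Definition acoev (X : obj P) := Arrow (coev X).

Lemma acompE A B C (g : Mor P B C) (f : Mor P A B) :
  acomp (Arrow g) (Arrow f) = Arrow (cmp g f).
Proof.
rewrite /acomp /=; case: excluded_middle_informative => [e|] //.
by rewrite (proof_irrelevance _ e erefl).
Qed.

Lemma acompE_cast A A' B B' C (g : Mor P B' C) (f : Mor P A B)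
    (eA : A = A') (eB : B = B') :
  acomp (Arrow g) (Arrow f) = Arrow (cmp g (castH eA eB f)).
Proof. case: A' / eA; move: g; case: B' / eB => g; exact: acompE. Qed.

(* Discharges the composability side conditions of the lemmas below. *)
Ltac obj_eq := try by rewrite /= ?tens_assoc ?tens_unitl ?tens_unitr.

Lemma acompA f g h : tgt f = src g -> tgt g = src h ->
  acomp h (acomp g f) = acomp (acomp h g) f.
Proof.
case: f => A B f; case: g => B' C g; case: h => C' D h /= eB eC; subst.
by rewrite !acompE cmpA.
Qed.

Lemma acomp1l f : acomp (aid (tgt f)) f = f.
Proof. by case: f => A B f; rewrite /aid acompE cmp1l. Qed.
Lemma acomp1r f : acomp f (aid (src f)) = f.
Proof. by case: f => A B f; rewrite /aid acompE cmp1r. Qed.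
Lemma acomp1l_eq f X : tgt f = X -> acomp (aid X) f = f.
Proof. by move<-; apply: acomp1l. Qed.
Lemma acomp1r_eq f X : src f = X -> acomp f (aid X) = f.
Proof. by move<-; apply: acomp1r. Qed.

Lemma atens_comp f g f' g' : tgt f = src g -> tgt f' = src g' ->
  atens (acomp g f) (acomp g' f') = acomp (atens g g') (atens f f').
Proof.
case: f => A B f; case: g => B1 C g; case: f' => A' B' f'; case: g' => B1' C' g' /= e e'.
by subst; rewrite /atens !acompE /= tensm_cmp.
Qed.

Lemma atens1 A B : atens (aid A) (aid B) = aid (tens A B).
Proof. by rewrite /atens /aid /= tensm1. Qed.

Lemma atensA f g h : atens (atens f g) h = atens f (atens g h).
Proof.
case: f => ? ? f; case: g => ? ? g; case: h => ? ? h.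
by rewrite /atens /= tensmA Arrow_castH.
Qed.

Lemma atens1l f : atens (aid (unitO P)) f = f.
Proof. by case: f => ? ? f; rewrite /atens /aid /= tensm1l Arrow_castH. Qed.
Lemma atens1r f : atens f (aid (unitO P)) = f.
Proof. by case: f => ? ? f; rewrite /atens /aid /= tensm1r Arrow_castH. Qed.

Lemma abraid_natural f g :
  acomp (abraid (tgt f) (tgt g)) (atens f g) = acomp (atens g f) (abraid (src f) (src g)).
Proof.
case: f => ? ? f; case: g => ? ? g.
by rewrite /atens /abraid /= !acompE braid_natural.
Qed.

Lemma abraidK A B : acomp (abraid B A) (abraid A B) = aid (tens A B).
Proof. by rewrite /abraid acompE braidK. Qed.

Lemma abraid_hexagon A B C :
  abraid A (tens B C) = acomp (atens (aid B) (abraid A C)) (atens (abraid A B) (aid C)).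
Proof.
rewrite /abraid /atens /aid /= braid_hexagon Arrow_castH.
by rewrite (acompE_cast _ _ (tens_assoc A B C) (tens_assoc B A C)).
Qed.

Lemma azigzag A : acomp (atens (aid A) (aevm A)) (atens (acoev A) (aid A)) = aid A.
Proof.
rewrite /aevm /acoev /atens /aid /=.
move: (zigzag_coev A) => /(congr1 (@Arrow _ _)); rewrite Arrow_castH => <-.
by rewrite (acompE_cast _ _ (tens_unitl A) (tens_assoc A (dualO A) A)).
Qed.

Lemma atens_split_lr g h Y U : Y = tgt g -> U = src h ->
  acomp (atens (aid Y) h) (atens g (aid U)) = atens g h.
Proof. by move=> -> ->; rewrite -atens_comp // acomp1l acomp1r. Qed.

Lemma atens_split_rl g h V X : V = tgt h -> X = src g ->
  acomp (atens g (aid V)) (atens (aid X) h) = atens g h.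
Proof. by move=> -> ->; rewrite -atens_comp // acomp1l acomp1r. Qed.

Lemma atens1_comp f g X : tgt f = src g ->
  atens (aid X) (acomp g f) = acomp (atens (aid X) g) (atens (aid X) f).
Proof. by move=> e; rewrite -atens_comp // (acomp1l (aid X)). Qed.

Lemma atens_comp1 f g X : tgt f = src g ->
  atens (acomp g f) (aid X) = acomp (atens g (aid X)) (atens f (aid X)).
Proof. by move=> e; rewrite -atens_comp // (acomp1l (aid X)). Qed.

Lemma abraid_natural_eq f g X Y X' Y' :
  X = tgt f -> Y = tgt g -> X' = src f -> Y' = src g ->
  acomp (abraid X Y) (atens f g) = acomp (atens g f) (abraid X' Y').
Proof. by move=> -> -> -> ->; apply: abraid_natural. Qed.

Lemma slide_states g h Y V :
  src g = unitO P -> src h = unitO P -> Y = tgt g -> V = tgt h ->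
  acomp (atens (aid Y) h) g = acomp (atens g (aid V)) h.
Proof.
move=> eg eh eY eV.
have := atens_split_lr eY (esym eh); rewrite atens1r => ->.
by have := atens_split_rl eV (esym eg); rewrite atens1l => ->.
Qed.

Lemma slide_effects g h X U :
  tgt g = unitO P -> tgt h = unitO P -> X = src g -> U = src h ->
  acomp h (atens g (aid U)) = acomp g (atens (aid X) h).
Proof.
move=> eg eh eX eU.
have := atens_split_lr (esym eg) eU; rewrite atens1l => ->.
by have := atens_split_rl (esym eh) eX; rewrite atens1r => ->.
Qed.

(* By the hexagon, [c := braid X unitO] is idempotent; being invertible, it is the
   identity. *)
Lemma abraid_unitl X : abraid (unitO P) X = aid X.
Proof.
set c := abraid X (unitO P).
have cc : acomp c c = c.
  by have := abraid_hexagon X (unitO P) (unitO P); rewrite atens1l atens1r tens_unitl => <-.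
have c_inv : acomp (abraid (unitO P) X) c = aid X by rewrite abraidK tens_unitr.
have c1 : c = aid X.
  rewrite -[LHS](@acomp1l_eq c X); obj_eq.
  by rewrite -{1}c_inv -acompA ?cc; obj_eq.
by rewrite -(@acomp1r_eq (abraid (unitO P) X) X); obj_eq; rewrite -{1}c1 c_inv.
Qed.

Definition atrace W h :=
  acomp (aevm W) (acomp (abraid W (dualO W)) (acomp (atens h (aid (dualO W))) (acoev W))).

Lemma Arrow_ctr W (f : Mor P W W) : Arrow (ctr f) = atrace W (Arrow f).
Proof. by rewrite /atrace /atens /aid /abraid /aevm /acoev /= !acompE. Qed.

Lemma atrace_unit (y : Mor P (unitO P) (unitO P)) : atrace (unitO P) (Arrow y) = Arrow y.
Proof.
rewrite /atrace abraid_unitl (@acomp1l_eq _ (dualO (unitO P))); obj_eq.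
rewrite acompA; obj_eq.
rewrite (@slide_effects (Arrow y) (aevm (unitO P)) (unitO P)); obj_eq.
rewrite atens1l -acompA; obj_eq.
have zz := azigzag (unitO P); rewrite atens1l atens1r in zz.
by rewrite zz (acomp1r (Arrow y)).
Qed.

Section Mate.
Variables (A B : obj P) (f : Mor P A B).

(* [mate f : B^r -> A^r] bends the ends of [f] with [coev A] and [evm B]. *)
Definition amate := acomp (acomp (atens (aevm B) (aid (dualO A)))
   (atens (atens (aid (dualO B)) (Arrow f)) (aid (dualO A)))) (atens (aid (dualO B)) (acoev A)).
Definition mate : Mor P (dualO B) (dualO A) :=
  castH (tens_unitr (dualO B)) (tens_unitl (dualO A)) (mor amate).

Lemma Arrow_mate : Arrow mate = amate.
Proof. by rewrite /mate Arrow_castH. Qed.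

Lemma coev_mate : acomp (atens (Arrow f) (aid (dualO A))) (acoev A) =
                  acomp (atens (aid B) (Arrow mate)) (acoev B).
Proof.
rewrite Arrow_mate /amate atens1_comp; obj_eq. rewrite atens1_comp; obj_eq.
rewrite -(acompA (f := acoev B)); obj_eq.
rewrite -(atensA (aid B) (aid (dualO B)) (acoev A)) atens1.
rewrite (@slide_states (acoev B) (acoev A) _ (tens A (dualO A))); obj_eq.
rewrite (acompA (f := acoev A)); obj_eq.
rewrite -(acompA (f := atens (acoev B) (aid (tens A (dualO A))))); obj_eq.
have -> : atens (aid B) (atens (atens (aid (dualO B)) (Arrow f)) (aid (dualO A)))
    = atens (atens (aid (tens B (dualO B))) (Arrow f)) (aid (dualO A)).
  by rewrite -atens1 !atensA.
have -> : atens (acoev B) (aid (tens A (dualO A)))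
    = atens (atens (acoev B) (aid A)) (aid (dualO A)) by rewrite -atens1 atensA.
rewrite -atens_comp1; obj_eq.
rewrite (atens_split_lr (h := Arrow f)); obj_eq.
rewrite -(@atens_split_rl (acoev B) (Arrow f) B (unitO P)) // atens1l.
rewrite atens_comp1; obj_eq.
rewrite (acompA (f := atens (Arrow f) (aid (dualO A)))); obj_eq.
have -> : atens (aid B) (atens (aevm B) (aid (dualO A)))
    = atens (atens (aid B) (aevm B)) (aid (dualO A)) by rewrite atensA.
rewrite -atens_comp1; obj_eq.
by rewrite azigzag atens1 (@acomp1l_eq _ (tens B (dualO A))); obj_eq.
Qed.

Lemma evm_mate : acomp (aevm A) (atens (Arrow mate) (aid A)) =
                 acomp (aevm B) (atens (aid (dualO B)) (Arrow f)).
Proof.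
rewrite Arrow_mate /amate atens_comp1; obj_eq. rewrite atens_comp1; obj_eq.
rewrite (acompA (h := aevm A)); obj_eq. rewrite (acompA (h := aevm A)); obj_eq.
have -> : atens (atens (aevm B) (aid (dualO A))) (aid A)
    = atens (aevm B) (aid (tens (dualO A) A)) by rewrite atensA atens1.
rewrite (@slide_effects (aevm B) (aevm A) (tens (dualO B) B) (tens (dualO A) A)); obj_eq.
rewrite -(acompA (h := aevm B)); obj_eq. rewrite -(acompA (h := aevm B)); obj_eq.
have -> : atens (aid (tens (dualO B) B)) (aevm A)
    = atens (aid (dualO B)) (atens (aid B) (aevm A)) by rewrite -atens1 atensA.
have -> : atens (atens (atens (aid (dualO B)) (Arrow f)) (aid (dualO A))) (aid A)
    = atens (aid (dualO B)) (atens (Arrow f) (aid (tens (dualO A) A))).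
  by rewrite -atens1 !atensA.
rewrite -atens1_comp; obj_eq.
rewrite (atens_split_lr (h := aevm A)); obj_eq.
rewrite -(@atens_split_rl (Arrow f) (aevm A) (unitO P) A) // atens1r.
have -> : atens (atens (aid (dualO B)) (acoev A)) (aid A)
    = atens (aid (dualO B)) (atens (acoev A) (aid A)) by rewrite atensA.
rewrite -atens1_comp; obj_eq.
by rewrite -(acompA (h := Arrow f)); obj_eq; rewrite azigzag acomp1r.
Qed.

End Mate.

(* Slide [f] around the loop by passing it through the coevaluation and the
   evaluation as its mate. *)
Lemma atraceC A B (f : Mor P A B) (g : Mor P B A) :
  atrace A (acomp (Arrow g) (Arrow f)) = atrace B (acomp (Arrow f) (Arrow g)).
Proof.
rewrite /atrace atens_comp1; obj_eq. rewrite -(acompA (f := acoev A)); obj_eq.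
rewrite coev_mate (acompA (f := acoev B)); obj_eq.
rewrite (@atens_split_rl (Arrow g) (Arrow (mate f)) (dualO A) B) //.
rewrite -(@atens_split_lr (Arrow g) (Arrow (mate f)) A (dualO B)) //.
rewrite -(acompA (f := acoev B)); obj_eq.
rewrite (acompA (h := abraid A (dualO A))); obj_eq.
rewrite (@abraid_natural_eq (aid A) (Arrow (mate f)) A (dualO A) A (dualO B)) //.
rewrite (acompA (h := aevm A)); obj_eq. rewrite (acompA (h := aevm A)); obj_eq.
rewrite evm_mate -(acompA (h := aevm B)); obj_eq.
rewrite -(@abraid_natural_eq (Arrow f) (aid (dualO B)) B (dualO B) A (dualO B)) //.
rewrite atens_comp1; obj_eq.
rewrite -(acompA (h := aevm B)); obj_eq.
rewrite -(acompA (h := abraid B (dualO B))); obj_eq.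
by rewrite -(acompA (f := acoev B)); obj_eq.
Qed.

Lemma ctr_cmpC A B (f : Mor P A B) (g : Mor P B A) : ctr (cmp g f) = ctr (cmp f g).
Proof. by apply: Arrow_inj; rewrite !Arrow_ctr -!acompE; apply: atraceC. Qed.

Lemma ctr_unit (y : Mor P (unitO P) (unitO P)) : ctr y = y.
Proof. by apply: Arrow_inj; rewrite Arrow_ctr; apply: atrace_unit. Qed.

(* The Eckmann-Hilton argument, from the interchange law. *)
Lemma tens0_cmp (s1 s2 : Mor P (unitO P) (unitO P)) : tens0 s1 s2 = cmp s1 s2.
Proof.
apply: Arrow_inj; rewrite /tens0 Arrow_castH -acompE.
have -> : Arrow (tensm s1 s2) = atens (Arrow s1) (Arrow s2) by [].
rewrite -{1}(acomp1r (Arrow s1)) -{1}(acomp1l (Arrow s2)) atens_comp //.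
by rewrite atens1r atens1l.
Qed.

End SymmetricMonoidal.

(** * The quotient [P^1] *)

Section LinearMap.
Variables (k : comPzRingType) (U V : lmodType k) (phi : U -> V).
Hypothesis phi_linear : forall a x y, phi (a *: x + y) = a *: phi x + phi y.
Let phiL : {linear U -> V} := HB.pack phi (GRing.isLinear.Build k U V *:%R phi phi_linear).

Lemma lin0 : phi 0 = 0. Proof. exact: (raddf0 phiL). Qed.
Lemma linB x y : phi (x - y) = phi x - phi y. Proof. exact: (raddfB phiL). Qed.
Lemma linZ a x : phi (a *: x) = a *: phi x. Proof. exact: (linearZZ phiL). Qed.
Lemma lin_sum n (F : 'I_n -> U) : phi (\sum_(i < n) F i) = \sum_(i < n) phi (F i).
Proof. exact: (raddf_sum phiL). Qed.
End LinearMap.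

Section LinearFunctional.
Variables (k : comPzRingType) (U : lmodType k) (phi : U -> k).
Hypothesis phi_linear : forall a x y, phi (a *: x + y) = a * phi x + phi y.
Let phiL : {linear U -> k^o} :=
  HB.pack (phi : U -> k^o) (GRing.isLinear.Build k U k^o *:%R phi phi_linear).

Lemma slin0 : phi 0 = 0. Proof. exact: (raddf0 phiL). Qed.
Lemma slinD x y : phi (x + y) = phi x + phi y. Proof. exact: (raddfD phiL). Qed.
Lemma slinB x y : phi (x - y) = phi x - phi y. Proof. exact: (raddfB phiL). Qed.
Lemma slinZ a x : phi (a *: x) = a * phi x. Proof. exact: (linearZZ phiL). Qed.
Lemma slin_sum n (F : 'I_n -> U) : phi (\sum_(i < n) F i) = \sum_(i < n) phi (F i).
Proof. exact: (raddf_sum phiL). Qed.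
End LinearFunctional.

Section QuotientP1.
Variables (k : comPzRingType) (P : ssmc_data k) (ev : Mor P (unitO P) (unitO P) -> k).
Hypothesis HP : is_ssmc P.
Hypothesis ev_lin : ev_linear ev.
Local Notation E := (unitO P).
Local Notation I1 := (I1 ev).
Local Notation eq1 := (eq1 ev).
Local Notation pairing := (pairing ev).

Section Composition.
Variables (A B C : obj P).

Lemma cmpBl (f : Mor P A B) (x y : Mor P B C) : cmp (x - y) f = cmp x f - cmp y f.
Proof. exact: (linB (cmp_linearl HP f)). Qed.
Lemma cmpZl (f : Mor P A B) a (x : Mor P B C) : cmp (a *: x) f = a *: cmp x f.
Proof. exact: (linZ (cmp_linearl HP f)). Qed.
Lemma cmp_suml (f : Mor P A B) n (F : 'I_n -> Mor P B C) :
  cmp (\sum_(i < n) F i) f = \sum_(i < n) cmp (F i) f.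
Proof. exact: (lin_sum (cmp_linearl HP f)). Qed.
Lemma cmpBr (g : Mor P B C) (x y : Mor P A B) : cmp g (x - y) = cmp g x - cmp g y.
Proof. exact: (linB (cmp_linearr HP g)). Qed.
Lemma cmpZr (g : Mor P B C) a (x : Mor P A B) : cmp g (a *: x) = a *: cmp g x.
Proof. exact: (linZ (cmp_linearr HP g)). Qed.
Lemma cmp0r (g : Mor P B C) : cmp g (0 : Mor P A B) = 0.
Proof. exact: (lin0 (cmp_linearr HP g)). Qed.
Lemma cmp_sumr (g : Mor P B C) n (F : 'I_n -> Mor P A B) :
  cmp g (\sum_(i < n) F i) = \sum_(i < n) cmp g (F i).
Proof. exact: (lin_sum (cmp_linearr HP g)). Qed.
End Composition.

Lemma ctr_linear W a (x y : Mor P W W) : ctr (a *: x + y) = a *: ctr x + ctr y.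
Proof. by rewrite /ctr (tensm_linearl HP) (cmp_linearl HP) !(cmp_linearr HP). Qed.

Lemma pairing_linearr W W' (s' : Mor P W' W) a (x y : Mor P W W') :
  pairing s' (a *: x + y) = a * pairing s' x + pairing s' y.
Proof. by rewrite /pairing (cmp_linearr HP) ctr_linear ev_lin. Qed.
Lemma pairing_linearl W W' (s : Mor P W W') a (x y : Mor P W' W) :
  pairing (a *: x + y) s = a * pairing x s + pairing y s.
Proof. by rewrite /pairing (cmp_linearl HP) ctr_linear ev_lin. Qed.

Section Congruence.
Variables (A B : obj P).

Lemma I1_0 : I1 (0 : Mor P A B).
Proof. by move=> s'; apply: (slin0 (pairing_linearr s')). Qed.
Lemma I1_D (x y : Mor P A B) : I1 x -> I1 y -> I1 (x + y).
Proof.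
by move=> hx hy s'; rewrite (slinD (pairing_linearr s')) [pairing _ x]hx [pairing _ y]hy addr0.
Qed.
Lemma I1_Z a (x : Mor P A B) : I1 x -> I1 (a *: x).
Proof. by move=> hx s'; rewrite (slinZ (pairing_linearr s')) [pairing _ x]hx mulr0. Qed.
Lemma I1_sum n (F : 'I_n -> Mor P A B) : (forall i, I1 (F i)) -> I1 (\sum_(i < n) F i).
Proof. by move=> HF; apply: (big_ind I1) => //; [apply: I1_0 | apply: I1_D]. Qed.

Lemma eq1_refl (s : Mor P A B) : eq1 s s.
Proof. by rewrite /eq1 subrr; apply: I1_0. Qed.
Lemma eq1_sym (s t : Mor P A B) : eq1 s t -> eq1 t s.
Proof. by move=> hst; rewrite /eq1 -opprB -scaleN1r; apply: I1_Z. Qed.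
Lemma eq1_trans (s t u : Mor P A B) : eq1 s t -> eq1 t u -> eq1 s u.
Proof. by rewrite /eq1 => hst htu; rewrite -(subrKA t); apply: I1_D. Qed.
Lemma eq1_D (s t s' t' : Mor P A B) : eq1 s t -> eq1 s' t' -> eq1 (s + s') (t + t').
Proof. by rewrite /eq1 opprD addrACA; apply: I1_D. Qed.
Lemma eq1_Z a (s t : Mor P A B) : eq1 s t -> eq1 (a *: s) (a *: t).
Proof. by rewrite /eq1 -scalerBr; apply: I1_Z. Qed.
Lemma eq1_sum n (F G : 'I_n -> Mor P A B) :
  (forall i, eq1 (F i) (G i)) -> eq1 (\sum_(i < n) F i) (\sum_(i < n) G i).
Proof. by move=> FG; rewrite /eq1 -sumrB; apply: I1_sum. Qed.
End Congruence.

Lemma I1_postcmp A B C (u : Mor P B C) (x : Mor P A B) : I1 x -> I1 (cmp u x).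
Proof. by move=> hx s'; rewrite /pairing (cmpA HP); apply: hx. Qed.
Lemma I1_precmp A B C (x : Mor P B C) (u : Mor P A B) : I1 x -> I1 (cmp x u).
Proof. by move=> hx s'; rewrite /pairing (cmpA HP) (ctr_cmpC HP) (cmpA HP); apply: hx. Qed.
Lemma eq1_postcmp A B C (u : Mor P B C) (s t : Mor P A B) :
  eq1 s t -> eq1 (cmp u s) (cmp u t).
Proof. by move=> hst; rewrite /eq1 -cmpBr; apply: I1_postcmp. Qed.
Lemma eq1_precmp A B C (u : Mor P A B) (s t : Mor P B C) :
  eq1 s t -> eq1 (cmp s u) (cmp t u).
Proof. by move=> hst; rewrite /eq1 -cmpBl; apply: I1_precmp. Qed.
Lemma eq1_cmp A B C (s t : Mor P B C) (s' t' : Mor P A B) :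
  eq1 s t -> eq1 s' t' -> eq1 (cmp s s') (cmp t t').
Proof.
by move=> hst hst'; apply: (eq1_trans (t := cmp t s')); [apply: eq1_precmp | apply: eq1_postcmp].
Qed.

Lemma ev_I1 (x : Mor P E E) : I1 x -> ev x = 0.
Proof. by move/(_ (idH E)); rewrite /pairing (cmp1l HP) (ctr_unit HP). Qed.

Lemma ev_eq1 (s t : Mor P E E) : eq1 s t -> ev s = ev t.
Proof. by move/ev_I1/eqP; rewrite (slinB ev_lin) subr_eq0 => /eqP. Qed.

Lemma pairing_state W (g : Mor P E W) (f : Mor P W E) : pairing g f = ev (cmp f g).
Proof. by rewrite /pairing (ctr_cmpC HP) (ctr_unit HP). Qed.

Hypothesis ev_mul : ev_multiplicative ev.

Lemma ev_cmp (a b : Mor P E E) : ev (cmp a b) = ev a * ev b.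
Proof. by rewrite -(tens0_cmp HP) ev_mul.2. Qed.

Lemma eq1_ev_scalar (s : Mor P E E) : eq1 s (ev s *: idH E).
Proof.
move=> y; rewrite /pairing (ctr_unit HP) cmpBr cmpZr (cmp1r HP) (slinB ev_lin).
by rewrite (slinZ ev_lin) ev_cmp mulrC subrr.
Qed.

Lemma ev_kronecker n (i j : 'I_n) (x : Mor P E E) :
  eq1 x (if i == j then idH E else 0) -> ev x = (i == j)%:R.
Proof. by move/ev_eq1 => ->; case: eqP => _; [apply: ev_mul.1 | apply: (slin0 ev_lin)]. Qed.

Lemma pairing_cmp_state W W' (u : Mor P E W) (h : Mor P W' E) (s : Mor P W W') :
  pairing (cmp u h) s = ev (cmp (cmp h s) u).
Proof. by rewrite /pairing -(cmpA HP) (ctr_cmpC HP) (ctr_unit HP). Qed.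

(** * Biproducts and bases *)

Definition biproduct W m (f : 'I_m -> Mor P W E) (g : 'I_m -> Mor P E W) : Prop :=
  (forall i j, eq1 (cmp (f i) (g j)) (if i == j then idH E else 0)) /\
  eq1 (\sum_(i < m) cmp (g i) (f i)) (idH W).

Lemma biproduct_propM' : propA ev -> propM' ev.
Proof.
move=> hA W W' s; have [m [f [g [_ gf_id]]]] := hA W.
exists m, (fun i => cmp s (g i)), f; apply: eq1_sym.
have := eq1_postcmp s gf_id; rewrite (cmp1r HP) cmp_sumr.
by under eq_bigr do rewrite (cmpA HP).
Qed.

Section BiproductBasis.
Variables (V W : obj P) (m n : nat).
Variables (f : 'I_m -> Mor P W E) (g : 'I_m -> Mor P E W).
Variables (f' : 'I_n -> Mor P V E) (g' : 'I_n -> Mor P E V).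
Hypotheses (bipW : biproduct f g) (bipV : biproduct f' g').

Let N := #|{: 'I_m * 'I_n}|.

(* The pairs [(i, j)] are indexed through [enum_val], as (F) asks for a basis
   indexed by an ordinal. *)
Definition bip_basis (q : 'I_N) : Mor P W V := cmp (g' (enum_val q).2) (f (enum_val q).1).
Definition bip_coord (s : Mor P W V) (q : 'I_N) : k :=
  ev (cmp (f' (enum_val q).2) (cmp s (g (enum_val q).1))).

Lemma bip_coord_linear q a (x y : Mor P W V) :
  bip_coord (a *: x + y) q = a * bip_coord x q + bip_coord y q.
Proof. by rewrite /bip_coord (cmp_linearl HP) (cmp_linearr HP) ev_lin. Qed.

Lemma bip_coord_I1 s q : I1 s -> bip_coord s q = 0.
Proof. by move=> hs; apply/ev_I1/I1_postcmp/I1_precmp. Qed.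

Lemma bip_coord_basis q q' : bip_coord (bip_basis q) q' = (q == q')%:R.
Proof.
rewrite /bip_coord /bip_basis -(inj_eq enum_val_inj).
case: (enum_val q) (enum_val q') => i j [i' j'] /=.
rewrite !(cmpA HP) -(cmpA HP _ (f i)) ev_cmp (ev_kronecker (bipV.1 _ _)).
by rewrite (ev_kronecker (bipW.1 _ _)) xpair_eqE -natrM mulnb andbC !(eq_sym i) (eq_sym j).
Qed.

Lemma bip_basis_span s : eq1 s (\sum_(q < N) bip_coord s q *: bip_basis q).
Proof.
have expand := eq1_cmp bipV.2 (eq1_postcmp s bipW.2).
rewrite (cmp1l HP) (cmp1r HP) in expand; apply: eq1_trans (eq1_sym expand) _.
have -> : \sum_(q < N) bip_coord s q *: bip_basis q =
    \sum_(j < n) \sum_(i < m) ev (cmp (f' j) (cmp s (g i))) *: cmp (g' j) (f i).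
  rewrite exchange_big pair_big /=.
  by rewrite (big_enum_val (fun p : 'I_m * 'I_n =>
            ev (cmp (f' p.2) (cmp s (g p.1))) *: cmp (g' p.2) (f p.1))).
rewrite cmp_sumr cmp_suml; apply: eq1_sum => j; rewrite cmp_sumr; apply: eq1_sum => i.
have -> : cmp (cmp (g' j) (f' j)) (cmp s (cmp (g i) (f i))) =
    cmp (g' j) (cmp (cmp (f' j) (cmp s (g i))) (f i)) by rewrite !(cmpA HP).
have := eq1_postcmp (g' j) (eq1_precmp (f i) (eq1_ev_scalar (cmp (f' j) (cmp s (g i))))).
by rewrite cmpZl (cmp1l HP) cmpZr.
Qed.

Lemma bip_basis_free (c : 'I_N -> k) :
  I1 (\sum_(q < N) c q *: bip_basis q) -> forall q, c q = 0.
Proof.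
move=> hc q'; rewrite -(bip_coord_I1 q' hc) (slin_sum (bip_coord_linear q')).
under eq_bigr do rewrite (slinZ (bip_coord_linear q')) bip_coord_basis.
rewrite (bigD1 q') //= eqxx mulr1 big1 ?addr0 // => q /negbTE ->.
by rewrite mulr0.
Qed.

Lemma bip_functional_represented (phi : Mor P W V -> k) :
  (forall a x y, phi (a *: x + y) = a * phi x + phi y) -> (forall x, I1 x -> phi x = 0) ->
  exists s' : Mor P V W, forall s, phi s = pairing s' s.
Proof.
move=> phi_lin phi_I1.
exists (\sum_(q < N) phi (bip_basis q) *: cmp (g (enum_val q).1) (f' (enum_val q).2)) => s.
have /eqP : phi (s - \sum_(q < N) bip_coord s q *: bip_basis q) = 0 by apply/phi_I1/bip_basis_span.
rewrite (slinB phi_lin) subr_eq0 => /eqP ->.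
rewrite (slin_sum phi_lin) (slin_sum (pairing_linearl s)); apply: eq_bigr => q _.
by rewrite (slinZ phi_lin) (slinZ (pairing_linearl s)) pairing_cmp_state -(cmpA HP) mulrC.
Qed.

End BiproductBasis.

Section Coordinates.
Variables (W : obj P) (n : nat) (b : 'I_n -> Mor P W E).
Hypothesis b_span : forall s, exists c : 'I_n -> k, eq1 s (\sum_(i < n) c i *: b i).
Hypothesis b_free : forall c : 'I_n -> k, I1 (\sum_(i < n) c i *: b i) -> forall i, c i = 0.

Definition coord (s : Mor P W E) : 'I_n -> k :=
  proj1_sig (constructive_indefinite_description _ (b_span s)).

Lemma coordP s : eq1 s (\sum_(i < n) coord s i *: b i).
Proof. exact: proj2_sig (constructive_indefinite_description _ (b_span s)). Qed.

Lemma coord_unique s (c : 'I_n -> k) : eq1 s (\sum_(i < n) c i *: b i) -> coord s =1 c.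
Proof.
move=> hc i; apply/eqP; rewrite -subr_eq0; apply/eqP.
apply: (b_free (c := fun i => coord s i - c i) _ i).
under eq_bigr do rewrite scalerBl; rewrite sumrB.
exact: eq1_trans (eq1_sym (coordP s)) hc.
Qed.

Lemma coord_linear i a x y : coord (a *: x + y) i = a * coord x i + coord y i.
Proof.
apply: (coord_unique (c := fun i => a * coord x i + coord y i)).
apply: eq1_trans (eq1_D (eq1_Z a (coordP x)) (coordP y)) _.
rewrite scaler_sumr -big_split; apply/eq1_sum => j /=.
by rewrite scalerDl scalerA; apply: eq1_refl.
Qed.

Lemma coord_I1 x : I1 x -> forall i, coord x i = 0.
Proof.
by move=> hx; apply: coord_unique; rewrite big1 => [|j _]; rewrite ?scale0r // /eq1 subr0.
Qed.

Lemma coord_basis i : coord (b i) =1 fun j => (i == j)%:R.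
Proof.
apply: coord_unique; rewrite (bigD1 i) //= eqxx scale1r big1 ?addr0 => [|j /negbTE].
  exact: eq1_refl.
by rewrite eq_sym => ->; rewrite scale0r.
Qed.

Lemma coord_dual_kronecker (g : 'I_n -> Mor P E W) :
  (forall i s, coord s i = ev (cmp s (g i))) ->
  forall i j, eq1 (cmp (b i) (g j)) (if i == j then idH E else 0).
Proof.
move=> gP i j; apply: eq1_trans (eq1_ev_scalar _) _.
by rewrite -gP coord_basis; case: eqP => _; rewrite ?scale1r ?scale0r; apply: eq1_refl.
Qed.

Lemma id_factors_through_basis : propM' ev ->
  exists h : 'I_n -> Mor P E W, eq1 (idH W) (\sum_(i < n) cmp (h i) (b i)).
Proof.
move=> hM; have [l [a [c id_ac]]] := hM W W (idH W).
exists (fun i => \sum_(t < l) coord (c t) i *: a t).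
apply: eq1_trans id_ac _.
apply: eq1_trans (eq1_sum (fun t => eq1_postcmp (a t) (coordP (c t)))) _.
under eq_bigr do rewrite cmp_sumr; rewrite exchange_big /=; apply: eq1_sum => i.
rewrite cmp_suml; apply: eq1_sum => t.
by rewrite cmpZr cmpZl; apply: eq1_refl.
Qed.
End Coordinates.

Lemma kronecker_biproduct W n (f : 'I_n -> Mor P W E) (g h : 'I_n -> Mor P E W) :
  (forall i j, eq1 (cmp (f i) (g j)) (if i == j then idH E else 0)) ->
  eq1 (idH W) (\sum_(i < n) cmp (h i) (f i)) -> biproduct f g.
Proof.
move=> fg_kron id_hf; split=> //.
suff g_h j : eq1 (g j) (h j).
  exact: eq1_trans (eq1_sum (fun j => eq1_precmp (f j) (g_h j))) (eq1_sym id_hf).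
have := eq1_precmp (g j) id_hf; rewrite (cmp1l HP) cmp_suml => /eq1_trans; apply.
under eq_bigr do rewrite -(cmpA HP).
apply: eq1_trans (eq1_sum (fun i => eq1_postcmp (h i) (fg_kron i j))) _.
under eq_bigr do rewrite (fun_if (cmp _)) (cmp1r HP) cmp0r.
by rewrite -big_mkcond big_pred1_eq; apply: eq1_refl.
Qed.

Lemma propFM'_propA (rev : forall A B : obj P, Mor P A B -> Mor P B A) :
  propF ev rev -> propM' ev -> propA ev.
Proof.
move=> hF hM W; have [[n [b [b_span b_free]]] [_ represent]] := hF E W.
have dual i : exists u : Mor P E W, forall s, coord b_span s i = ev (cmp s u).
  have [s' rep] :=
    represent _ (coord_linear b_span b_free i) (fun x hx => coord_I1 b_span b_free hx i).
  by exists (rev _ _ s') => s; rewrite rep pairing_state.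
have [g gP] := fin_all_exists dual.
have [h id_hb] := id_factors_through_basis b_span hM.
exists n, b, g; exact: kronecker_biproduct (coord_dual_kronecker b_free gP) id_hb.
Qed.

Section Reversal.
Variables (iota : {rmorphism k -> k}) (rev : forall A B : obj P, Mor P A B -> Mor P B A).
Hypotheses (rev_reversal : is_reversal iota rev)
           (ev_rev : forall s : Mor P E E, ev (rev s) = iota (ev s)).

Lemma revK A B (x : Mor P A B) : rev (rev x) = x.
Proof. exact: rev_reversal.2.1. Qed.

Lemma revB A B (x y : Mor P A B) : rev (x - y) = rev x - rev y.
Proof. by rewrite -scaleN1r addrC rev_reversal.1 rmorphN1 scaleN1r addrC. Qed.

Lemma pairing_rev W V (x s : Mor P W V) :
  pairing (rev x) s = iota (pairing (rev s) x).
Proof.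
have [_ [_ [rev_cmp rev_ctr]]] := rev_reversal.
by rewrite /pairing -[s in cmp _ s]revK -rev_cmp rev_ctr ev_rev.
Qed.

Lemma pairing_rev_nondegenerate W V (s1 s2 : Mor P W V) :
  (forall s, pairing (rev s1) s = pairing (rev s2) s) -> eq1 s1 s2.
Proof.
move=> s12 y; rewrite -[y]revK pairing_rev revB (slinB (pairing_linearl _)) s12 subrr.
exact: rmorph0.
Qed.

Lemma biproduct_propF : propA ev -> propF ev rev.
Proof.
move=> hA V W; have [m [f [g bipW]]] := hA W; have [n [f' [g' bipV]]] := hA V.
split; [|split].
- exists _, (bip_basis f g'); split; last exact: (bip_basis_free bipW bipV).
  by move=> s; exists (bip_coord g f' s); apply: (bip_basis_span bipW bipV).
- exact: pairing_rev_nondegenerate.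
- move=> phi phi_lin phi_I1.
  have [s' rep] := bip_functional_represented bipW bipV phi_lin phi_I1.
  by exists (rev s') => s; rewrite revK.
Qed.

End Reversal.
End QuotientP1.

Theorem mainTheorem8 (k : comPzRingType) (iota : {rmorphism k -> k})
  (P : ssmc_data k) (ev : Mor P (unitO P) (unitO P) -> k)
  (rev : forall A B : obj P, Mor P A B -> Mor P B A) :
  involutive iota ->
  is_ssmc P ->
  ev_linear ev ->
  ev_multiplicative ev ->
  ev_involutive ev iota rev ->
  (propF ev rev /\ propM' ev) <-> propA ev.
Proof.
move=> _ HP ev_lin ev_mul [rev_reversal ev_rev]; split.
  by case=> hF hM; apply: (propFM'_propA HP ev_lin ev_mul hF hM).
move=> hA; split; first exact: (biproduct_propF HP ev_lin ev_mul rev_reversal ev_rev).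
exact: (biproduct_propM' HP ev_lin).
Qed.
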